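(* Let $\Omega$ be a metrizable separable space, $\mathcal{P}$ a weakly relatively compact set of Borel probability measures on $\Omega$, $1\le p<\infty$, and $c_p=c_{p,\mathcal{P}}$. Then: (i) for every non-negative bounded lower semicontinuous function $g$ on $\Omega$, $c_p(g)=\sup_{Q\in\mathcal{P}}E_Q(g^p)^{1/p}$; (ii) for every Borel function $f$ on $\Omega$, $\sup_{Q\in\mathcal{P}}E_Q(|f|^p)^{1/p}\le c_p(f)$.
   Context: $c_{p,\mathcal{P}}(f)=\sup_{P\in\mathcal{P}}E_P(|f|^p)^{1/p}$ for $f\in\mathcal{C}_b(\Omega)$, extended to all real functions by $c(f)=\sup\{c(\varphi):\varphi\in\mathcal{C}_b(\Omega),0\le\varphi\le f\}$ for $f\ge0$ lower semicontinuous and $c(g)=\inf\{c(f):f\text{ l.s.c.},f\ge|g|\}$ for arbitrary $g$. Weak relative compactness refers to the topology on probability measures making $\mu\mapsto\int f\,d\mu$ continuous for all $f\in\mathcal{C}_b(\Omega)$. *)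

From HB Require Import structures.
From mathcomp Require Import all_boot all_order all_algebra.
From mathcomp Require Import all_classical all_reals all_analysis.
Set Implicit Arguments. Unset Strict Implicit. Unset Printing Implicit Defensive.
Import Order.TTheory GRing.Theory Num.Theory.
Import numFieldNormedType.Exports.
Local Open Scope classical_set_scope.
Local Open Scope ring_scope.

Section Capacity.
Variables (R : realType) (Omega : pseudoPMetricType R).

Definition Borel := g_sigma_algebraType (@open Omega).

(* metrizable: the topology of Omega comes from a pseudometric, and it is Hausdorff *)
Definition metrizable_separable : Prop :=
  hausdorff_space Omega /\ exists D : set Omega, countable D /\ dense D.

Definition Cb (f : Omega -> R) : Prop :=
  continuous f /\ exists M : R, forall x, `|f x| <= M.

(* weak topology on probability measures: initial topology of
   mu |-> (f |-> int f dmu), f ranging over C_b (other coordinates are 0) *)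
Definition weak_emb (mu : probability Borel R) : {ptws (Omega -> R) -> R} :=
  fun f => if pselect (Cb f) then Rintegral mu setT (f : Borel -> R) else 0.

(* relative compactness in the weak topology on the space of probability
   measures: the closure (in that space) of P is compact *)
Definition weakly_relatively_compact (P : set (probability Borel R)) : Prop :=
  compact (closure (weak_emb @` P) `&` range weak_emb).

Variable p : R.

Definition Enorm (Q : probability Borel R) (f : Omega -> R) : \bar R :=
  ((\int[Q]_x ((`|f x| `^ p)%:E : \bar R)) `^ p^-1)%E.

Variable P : set (probability Borel R).

Definition cp_Cb (f : Omega -> R) : \bar R := ereal_sup [set Enorm Q f | Q in P].

Definition lsc (f : Omega -> R) : Prop :=
  lower_semicontinuous (fun x => (f x)%:E : \bar R).

Definition cp_lsc (f : Omega -> R) : \bar R :=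
  ereal_sup [set cp_Cb phi | phi in [set phi | Cb phi /\ forall x, 0 <= phi x <= f x]].

Definition cp (g : Omega -> R) : \bar R :=
  ereal_inf [set cp_lsc f | f in [set f | lsc f /\ forall x, `|g x| <= f x]].

End Capacity.

From HB Require Import structures.
From mathcomp Require Import all_boot all_order all_algebra.
From mathcomp Require Import all_classical all_reals all_analysis.
From mathcomp Require Import lra measurable_realfun.
Set Implicit Arguments. Unset Strict Implicit. Unset Printing Implicit Defensive.
Import Order.TTheory GRing.Theory Num.Theory.
Import numFieldNormedType.Exports.
Local Open Scope classical_set_scope.
Local Open Scope ring_scope.

(** A non-negative lower semicontinuous [h] is the pointwise limit of the
   nondecreasing sequence of bounded continuous functions
   [phi_n x = min (inf_y (h y + n d(x, y))) n] (Baire), which lie between [0]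
   and [h].  By monotone convergence [E_Q(h^p)] is the limit of the
   [E_Q(phi_n^p)], which are bounded by [c_p(h)^p]; this gives the hard half of
   (i), the other half being monotonicity of the integral.  For (ii), any
   lower semicontinuous [h >= |f|] satisfies
   [E_Q(|f|^p)^(1/p) <= E_Q(h^p)^(1/p) <= c_p(h)] by the same argument. *)

Lemma nondecreasing_cvgn_ub (R : realType) (u : R ^nat) (L : R) :
  nondecreasing_seq u -> (forall n, u n <= L) ->
  (forall b, b < L -> exists n, b < u n) -> u @ \oo --> L.
Proof.
move=> u_nd uL u_approach; apply/cvgrPdist_le => e e0.
have [N LuN] : exists N, L - e < u N by apply: u_approach; rewrite ltrBlDr ltrDl.
near=> n; have Nn : (N <= n)%N by near: n; exists N.
rewrite ler_distlC (le_trans (ltW LuN) (u_nd _ _ Nn)) /=.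
by rewrite (le_trans (uL n)) // lerDl ltW.
Unshelve. all: end_near.
Qed.

Lemma ler_powR2r (R : realType) (p x y : R) :
  0 <= p -> 0 <= x -> x <= y -> x `^ p <= y `^ p.
Proof.
by move=> p0 x0 xy; apply: (ge0_ler_powR p0); rewrite ?nnegrE ?(le_trans x0 xy).
Qed.

Lemma lee_poweR2r (R : realType) (p : R) (x y : \bar R) :
  0 <= p -> (0 <= x)%E -> (x <= y)%E -> (x `^ p <= y `^ p)%E.
Proof.
move=> p0 x0 xy; apply: gt0_ler_poweR => //; rewrite in_itv /= leey andbT //.
exact: le_trans xy.
Qed.

Lemma poweRK (R : realType) (r : R) (x : \bar R) :
  r != 0 -> (0 <= x)%E -> ((x `^ r) `^ r^-1)%E = x.
Proof. by move=> r0 x0; rewrite -poweRrM mulfV // poweRe1. Qed.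

Lemma poweRVK (R : realType) (r : R) (x : \bar R) :
  r != 0 -> (0 <= x)%E -> ((x `^ r^-1) `^ r)%E = x.
Proof. by move=> r0 x0; rewrite -poweRrM mulVf // poweRe1. Qed.

Lemma nondecreasing_cvgn_powR (R : realType) (u : R ^nat) (L p : R) :
  0 < p -> (forall n, 0 <= u n) -> nondecreasing_seq u -> u @ \oo --> L ->
  u n `^ p @[n --> \oo] --> L `^ p.
Proof.
move=> p0 u0 u_nd uL.
have u_le n : u n <= L.
  by have := nondecreasing_cvgn_le u_nd (cvgP _ uL) n; rewrite (cvg_lim _ uL).
have L0 : 0 <= L := le_trans (u0 0%N) (u_le 0%N).
have powR_le x y : 0 <= x -> x <= y -> x `^ p <= y `^ p by apply/ler_powR2r/ltW.
apply: nondecreasing_cvgn_ub.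
- by move=> m n mn; apply: powR_le; rewrite ?u0 ?u_nd.
- by move=> n; apply: powR_le; rewrite ?u0.
move=> b bL; have [b0|b0] := ltP b 0.
  by exists 0%N; rewrite (lt_le_trans b0) ?powR_ge0.
have rootK : (b `^ p^-1) `^ p = b by rewrite -powRrM mulVf ?gt_eqF ?powRr1.
have root_lt : b `^ p^-1 < L.
  rewrite ltNge; apply: contraTN bL => Lb.
  by rewrite -leNgt -[leRHS]rootK powR_le.
near \oo => n; exists n; rewrite -[ltLHS]rootK.
apply: gt0_ltr_powR; rewrite ?nnegrE ?powR_ge0 ?u0 //.
by near: n; exact: cvgr_gt uL _ root_lt.
Unshelve. all: end_near.
Qed.

Lemma mine1_triangle (R : realType) (a b c : \bar R) :
  (0 <= a)%E -> (0 <= b)%E -> (c <= a + b)%E ->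
  (mine c 1%:E <= mine a 1%:E + mine b 1%:E)%E.
Proof.
move=> a0 b0 cab.
have min1_ge0 (e : \bar R) : (0 <= e)%E -> (0 <= mine e 1%:E)%E.
  by rewrite le_min lee01 andbT.
have minc1 : (mine c 1%:E <= 1%:E)%E by rewrite ge_min lexx orbT.
have [a1|a1] := leP 1%:E a; first by rewrite (le_trans minc1) // leeDl ?min1_ge0.
have [b1|b1] := leP 1%:E b; first by rewrite (le_trans minc1) // leeDr.
by rewrite (le_trans _ cab) // ge_min lexx.
Qed.

Section truncated_distance.
Variables (R : realType) (X : pseudoPMetricType R).

(* [edist] may be infinite; truncating it at 1 gives a real-valued pseudometric
   with the same small balls. *)
Definition dist1 (x y : X) : R := fine (mine (edist (x, y)) 1%:E).

Lemma mine_edist1 x y : mine (edist (x, y)) 1%:E = (dist1 x y)%:E.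
Proof.
rewrite /dist1 fineK // ge0_fin_numE; last by rewrite le_min edist_ge0 lee01.
by rewrite gt_min ltry orbT.
Qed.

Lemma dist1_ge0 x y : 0 <= dist1 x y.
Proof. by rewrite -lee_fin -mine_edist1 le_min edist_ge0 lee01. Qed.

Lemma dist1xx x : dist1 x x = 0.
Proof. by apply: EFin_inj; rewrite -mine_edist1 edist_refl min_l ?lee01. Qed.

Lemma dist1C x y : dist1 x y = dist1 y x.
Proof. by rewrite /dist1 edist_sym. Qed.

Lemma dist1_triangle x y z : dist1 x z <= dist1 x y + dist1 y z.
Proof.
rewrite -lee_fin EFinD -!mine_edist1.
exact: mine1_triangle (edist_ge0 _) (edist_ge0 _) (edist_triangle _ _ _).
Qed.

Lemma dist1_lt_ball x y r : r <= 1 -> dist1 x y < r -> ball x r y.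
Proof.
move=> r1 dr; apply: (@edist_lt_ball _ _ _ (x, y)).
move: dr; rewrite -lte_fin -mine_edist1 gt_min => /orP[//|].
by rewrite lte_fin ltNge r1.
Qed.

Lemma ball_dist1_le x y r : 0 < r -> ball x r y -> dist1 x y <= r.
Proof.
move=> r0 xry; rewrite -lee_fin -mine_edist1 ge_min.
by rewrite (@edist_fin _ _ _ (x, y)).
Qed.

End truncated_distance.

Section lsc_approximation.
Variables (R : realType) (Omega : pseudoPMetricType R) (h : Omega -> R).
Hypotheses (h_ge0 : forall x, 0 <= h x) (h_lsc : lsc h).

Definition lipschitz_minorant (n : nat) (x : Omega) : R :=
  inf [set h y + n%:R * dist1 x y | y in [set: Omega]].

Let minorant_set_neq0 n x :
  [set h y + n%:R * dist1 x y | y in [set: Omega]] !=set0.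
Proof. by exists (h x + n%:R * dist1 x x), x. Qed.

Let minorant_set_ge0 n x y : 0 <= h y + n%:R * dist1 x y.
Proof. by rewrite addr_ge0 // mulr_ge0 // dist1_ge0. Qed.

Lemma lipschitz_minorant_le n x y :
  lipschitz_minorant n x <= h y + n%:R * dist1 x y.
Proof.
by apply: ge_inf; [exists 0 => _ [z _ <-]; exact: minorant_set_ge0 | exists y].
Qed.

Lemma lipschitz_minorant_ge0 n x : 0 <= lipschitz_minorant n x.
Proof. by apply: lb_le_inf => // _ [y _ <-]; exact: minorant_set_ge0. Qed.

Lemma lipschitz_minorant_le_fun n x : lipschitz_minorant n x <= h x.
Proof. by have := lipschitz_minorant_le n x x; rewrite dist1xx mulr0 addr0. Qed.

Lemma lipschitz_minorant_lipschitz n x x' :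
  lipschitz_minorant n x <= lipschitz_minorant n x' + n%:R * dist1 x x'.
Proof.
rewrite -lerBlDr; apply: lb_le_inf => // _ [y _ <-].
rewrite lerBlDr (le_trans (lipschitz_minorant_le n x y)) // -addrA lerD2l.
by rewrite -mulrDr ler_wpM2l // addrC dist1_triangle.
Qed.

Lemma continuous_lipschitz_minorant n : continuous (lipschitz_minorant n).
Proof.
move=> x; apply/cvgrPdist_le => e e0.
have r0 : 0 < e / n.+1%:R by rewrite divr_gt0.
near=> z.
have xz : dist1 x z <= e / n.+1%:R.
  by apply: ball_dist1_le => //; near: z; exact: nbhsx_ballx.
have nxz : n%:R * dist1 x z <= e.
  rewrite (le_trans (ler_wpM2l _ xz)) // mulrA ler_pdivrMr ?ltr0Sn // mulrC.
  by rewrite ler_pM2l // ler_nat leqnSn.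
have := lipschitz_minorant_lipschitz n z x; rewrite dist1C.
have := lipschitz_minorant_lipschitz n x z.
by rewrite ler_distlC; lra.
Unshelve. all: end_near.
Qed.

Lemma lipschitz_minorant_nondecreasing x :
  nondecreasing_seq (lipschitz_minorant ^~ x).
Proof.
move=> m n mn; apply: lb_le_inf => // _ [y _ <-].
rewrite (le_trans (lipschitz_minorant_le m x y)) // lerD2l.
by rewrite ler_wpM2r ?dist1_ge0 // ler_nat.
Qed.

(* Near [x] lower semicontinuity keeps [h] above the midpoint [m] of [a] and
   [h x]; away from [x] the penalty [N * dist1 x y] alone exceeds [m]. *)
Lemma lipschitz_minorant_approach x a :
  a < h x -> exists n, a < lipschitz_minorant n x.
Proof.
move=> ahx; have [am mh] := midf_lt ahx; set m := (a + h x) / 2 in am mh.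
have [V /nbhs_ballP[r r0 rV] Vm] :
    exists2 V, nbhs x V & forall y, V y -> (m%:E < (h y)%:E)%E.
  by apply: h_lsc; rewrite lte_fin.
pose r' := Num.min r 1; have r'0 : 0 < r' by rewrite lt_min r0 ltr01.
pose N := (Num.truncn (m / r')).+1.
exists N; apply: lt_le_trans am _; apply: lb_le_inf => // _ [y _ <-].
have [xy_lt|xy_ge] := ltP (dist1 x y) r'.
  have Vy : V y.
    apply: rV; apply: (@le_ball _ _ _ r'); first by rewrite ge_min lexx.
    by apply: dist1_lt_ball xy_lt; rewrite ge_min lexx orbT.
  have := Vm y Vy; rewrite lte_fin => /ltW /le_trans; apply.
  by rewrite lerDl mulr_ge0 ?dist1_ge0.
have mN : m <= N%:R * r' by rewrite -ler_pdivrMr // ltW // truncnS_gt.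
have Nr' : N%:R * r' <= N%:R * dist1 x y by rewrite ler_wpM2l.
by have := h_ge0 y; lra.
Qed.

Definition baire_approx (n : nat) (x : Omega) : R :=
  Num.min (lipschitz_minorant n x) n%:R.

Lemma baire_approx_ge0 n x : 0 <= baire_approx n x.
Proof. by rewrite le_min lipschitz_minorant_ge0 ler0n. Qed.

Lemma baire_approx_le_fun n x : baire_approx n x <= h x.
Proof. by rewrite ge_min lipschitz_minorant_le_fun. Qed.

Lemma baire_approx_nondecreasing x : nondecreasing_seq (baire_approx ^~ x).
Proof.
by move=> m n mn; rewrite le_min2 // ?lipschitz_minorant_nondecreasing // ler_nat.
Qed.

Lemma Cb_baire_approx n : Cb (baire_approx n).
Proof.
split=> [x|]; last first.
  by exists n%:R => x; rewrite ger0_norm ?baire_approx_ge0 // ge_min lexx orbT.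
apply: continuous_min; [exact: continuous_lipschitz_minorant | exact: cst_continuous].
Qed.

Lemma baire_approx_cvg x : baire_approx ^~ x @ \oo --> h x.
Proof.
apply: nondecreasing_cvgn_ub => [|n|].
- exact: baire_approx_nondecreasing.
- exact: baire_approx_le_fun.
- move=> b /lipschitz_minorant_approach[n1 bn1].
  exists (maxn n1 (Num.truncn b).+1); rewrite lt_min; apply/andP; split.
    by rewrite (lt_le_trans bn1) // lipschitz_minorant_nondecreasing // leq_maxl.
  by rewrite (lt_le_trans (truncnS_gt b)) // ler_nat leq_maxr.
Qed.

End lsc_approximation.

Lemma continuous_lsc (R : realType) (Omega : pseudoPMetricType R) (f : Omega -> R) :
  continuous f -> lsc f.
Proof.
move=> cf x a; rewrite lte_fin => afx.
exists (f @^-1` [set y | a < y]); first exact: cf x _ (lt_nbhsr afx).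
by move=> y /=; rewrite lte_fin.
Qed.

Lemma lsc_measurable (R : realType) (Omega : pseudoPMetricType R) (h : Omega -> R) :
  lsc h -> measurable_fun [set: Borel Omega] (h : Borel Omega -> R).
Proof.
move=> hl; apply: (@measurability _ _ _ _ _ _ (@RGenOInfty.G R)).
  exact: RGenOInfty.measurableE.
move=> _ [_ [a ->] <-]; rewrite setTI; apply: sub_sigma_algebra.
have := (lower_semicontinuousP _).1 hl a.
by congr open; apply/seteqP; split => y /=; rewrite in_itv /= andbT lte_fin.
Qed.

Section pnorm.
Context d (T : measurableType d) (R : realType).
Variables (mu : {measure set T -> \bar R}) (p : R).

Definition pnorm (f : T -> R) : \bar R := ((\int[mu]_x (f x `^ p)%:E) `^ p^-1)%E.

Hypothesis p0 : 0 < p.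
Let p_ge0 : 0 <= p := ltW p0.

Let integral_powR_ge0 (f : T -> R) : (0 <= \int[mu]_x (f x `^ p)%:E)%E.
Proof. by apply: integral_ge0 => x _; rewrite lee_fin powR_ge0. Qed.

Let measurable_powR_EFin (f : T -> R) :
  measurable_fun setT f -> measurable_fun setT (fun x => (f x `^ p)%:E).
Proof.
by move=> mf; apply/measurable_EFinP; exact: measurableT_comp (measurable_powR p) mf.
Qed.

Lemma le_pnorm (f g : T -> R) : measurable_fun setT f -> measurable_fun setT g ->
  (forall x, 0 <= f x <= g x) -> (pnorm f <= pnorm g)%E.
Proof.
move=> mf mg fg.
apply: lee_poweR2r; [by rewrite invr_ge0 | exact: integral_powR_ge0 |].
apply: ge0_le_integral => //.
- by move=> x _; rewrite lee_fin powR_ge0.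
- exact: measurable_powR_EFin.
- exact: measurable_powR_EFin.
by move=> x _; have /andP[f0 fgx] := fg x; rewrite lee_fin ler_powR2r.
Qed.

Lemma pnorm_le_nondecreasing_cvg (u : (T -> R)^nat) (f : T -> R) (B : \bar R) :
  (forall n, measurable_fun setT (u n)) -> (forall n x, 0 <= u n x) ->
  (forall x, nondecreasing_seq (u ^~ x)) -> (forall x, u ^~ x @ \oo --> f x) ->
  (forall n, (pnorm (u n) <= B)%E) -> (pnorm f <= B)%E.
Proof.
move=> um u0 u_nd uf uB.
have B0 : (0 <= B)%E := le_trans (poweR_ge0 _ _) (uB 0%N).
have int_cvg : (\int[mu]_x (u n x `^ p)%:E)%E @[n --> \oo] -->
    (\int[mu]_x (f x `^ p)%:E)%E.
  have -> : (fun x => (f x `^ p)%:E) = fun x => limn (fun n => (u n x `^ p)%:E).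
    apply/funext => x; apply/esym/cvg_lim => //; apply: cvg_EFin; first exact: nearW.
    exact: nondecreasing_cvgn_powR.
  apply: cvg_monotone_convergence => //.
  - by move=> n; exact: measurable_powR_EFin.
  - by move=> n x _; rewrite lee_fin powR_ge0.
  - by move=> x _ m n mn; rewrite lee_fin ler_powR2r ?u0 ?u_nd.
rewrite -(poweRK (lt0r_neq0 p0) B0).
apply: lee_poweR2r; [by rewrite invr_ge0 | exact: integral_powR_ge0 |].
rewrite -(cvg_lim _ int_cvg) //; apply: lime_le; first exact: cvgP int_cvg.
apply: nearW => n; rewrite -(poweRVK (lt0r_neq0 p0) (integral_powR_ge0 (u n))).
by apply: lee_poweR2r; rewrite ?poweR_ge0 ?uB.
Qed.

End pnorm.

Section capacity.
Variables (R : realType) (Omega : pseudoPMetricType R).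
Variables (P : set (probability (Borel Omega) R)) (p : R).
Hypothesis p0 : 0 < p.

Lemma EnormE Q f : Enorm p Q f = pnorm Q p (fun x : Borel Omega => `|f x|).
Proof. by []. Qed.

Lemma Enorm_le_cp_lsc h phi Q : P Q -> Cb phi ->
  (forall x, 0 <= phi x <= h x) -> (Enorm p Q phi <= cp_lsc p P h)%E.
Proof.
move=> PQ Cphi phih; apply: (@le_trans _ _ (cp_Cb p P phi)).
  by apply: ereal_sup_ubound; exists Q.
by apply: ereal_sup_ubound; exists phi.
Qed.

Lemma pnorm_le_cp_lsc h Q : (forall x, 0 <= h x) -> lsc h -> P Q ->
  (pnorm Q p h <= cp_lsc p P h)%E.
Proof.
move=> h0 hl PQ.
apply: (pnorm_le_nondecreasing_cvg (mu := Q) p0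
  (u := baire_approx h : _ -> Borel Omega -> R)).
- move=> n; apply: lsc_measurable; apply: continuous_lsc.
  exact: (Cb_baire_approx h0 n).1.
- exact: baire_approx_ge0.
- exact: baire_approx_nondecreasing.
- exact: baire_approx_cvg.
move=> n; have -> : pnorm Q p (baire_approx h n) = Enorm p Q (baire_approx h n).
  rewrite EnormE; congr pnorm; apply/funext => x.
  by rewrite ger0_norm ?baire_approx_ge0.
apply: Enorm_le_cp_lsc => //; first exact: Cb_baire_approx.
by move=> x; rewrite baire_approx_ge0 ?baire_approx_le_fun.
Qed.

Lemma cp_lsc_sup_pnorm g : (forall x, 0 <= g x) -> lsc g ->
  cp_lsc p P g = ereal_sup [set pnorm Q p g | Q in P].
Proof.
move=> g0 gl; apply/eqP; rewrite eq_le; apply/andP; split; last first.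
  by apply/ereal_supP => _ [Q PQ <-]; exact: pnorm_le_cp_lsc.
apply/ereal_supP => _ [phi [[phi_cont _] phig] <-].
apply/ereal_supP => _ [Q PQ <-].
apply: (@le_trans _ _ (pnorm Q p g)); last by apply: ereal_sup_ubound; exists Q.
rewrite EnormE; apply: (le_pnorm Q p0); [|exact: lsc_measurable|].
- apply: lsc_measurable; apply: continuous_lsc => x.
  exact: continuous_comp (phi_cont x) (@norm_continuous _ R^o _).
by move=> x; have /andP[phi0 phigx] := phig x; rewrite normr_ge0 ger0_norm.
Qed.

Lemma sup_Enorm_le_cp f :
  measurable_fun [set: Borel Omega] (f : Borel Omega -> R) ->
  (ereal_sup [set Enorm p Q f | Q in P] <= cp p P f)%E.
Proof.
move=> mf; apply/ereal_supP => _ [Q PQ <-].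
apply/ereal_infP => _ [h [hl fh] <-].
have h0 x : 0 <= h x := le_trans (normr_ge0 _) (fh x).
apply: le_trans (pnorm_le_cp_lsc h0 hl PQ).
rewrite EnormE; apply: (le_pnorm Q p0); [|exact: lsc_measurable|].
  exact: measurableT_comp (@normr_measurable R setT) mf.
by move=> x; rewrite normr_ge0 fh.
Qed.

End capacity.

Theorem proposition4p4 (R : realType) (Omega : pseudoPMetricType R)
  (P : set (probability (Borel Omega) R)) (p : R) :
  metrizable_separable Omega ->
  weakly_relatively_compact P ->
  1 <= p ->
  (forall g : Omega -> R,
      (forall x, 0 <= g x) -> (exists M : R, forall x, g x <= M) -> lsc g ->
      cp_lsc p P g =
      ereal_sup [set ((\int[Q]_x (((g x) `^ p)%:E : \bar R)) `^ p^-1)%E | Q in P])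
  /\
  (forall f : Omega -> R,
      measurable_fun [set: Borel Omega] (f : Borel Omega -> R) ->
      (ereal_sup [set Enorm p Q f | Q in P] <= cp p P f)%E).
Proof.
move=> _ _ p1; have p0 : 0 < p := lt_le_trans ltr01 p1.
split; first by move=> g g0 _ gl; exact: cp_lsc_sup_pnorm.
by move=> f mf; exact: sup_Enorm_le_cp.
Qed.
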